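(* Suppose $\mathcal E$ generates a stochastic process. Then for all $j,j'\in\{0,\dots,n_\tau\}$ with $j'\ge j$, all $x,x'\in\Lambda$ and all $h\in\mathbb R^{\{1,\dots,n_\tau\}\times\Lambda}$, $$\big|\mathcal C(h)_{(j,x),(j',x')}\big|\le\big|\mathcal C(0)_{(j,x),(j',x')}\big|=\big(e^{-(j'-j)\epsilon\mathcal E}\big)_{x,x'} .$$
   Context: $\Lambda$ is a finite discrete torus $\mathbb Z^d/L\mathbb Z^d$ (lattice spacing $1$), operators on $\mathbb C^\Lambda$ are identified with their matrices, and functions on $\Lambda$ act as multiplication operators. $\mathcal E$ is a hermitian operator on $\mathbb C^\Lambda$; it generates a stochastic process if $(e^{-\tau\mathcal E})_{x,y}\ge0$ for all $\tau\ge0$ and $x,y\in\Lambda$. $\beta>0$, $n_\tau\in\mathbb N$, $\epsilon=\beta/n_\tau$. For $h=(h_j)_{j=1}^{n_\tau}$, $h_j\in\mathbb R^\Lambda$, and $h_0:=0$, let $\mathcal Q(h)$ be the block matrix indexed by $j,j'\in\{0,\dots,n_\tau\}$ with $\mathcal Q(h)_{j,j'}=\delta_{j,j'}\mathbf 1-\delta_{j+1,j'}e^{-\epsilon\mathcal E}e^{i\sqrt\epsilon h_{j'}}$ (it is upper triangular with identity diagonal, hence invertible), and $\mathcal C(h)=\mathcal Q(h)^{-1}$ with matrix elements $\mathcal C(h)_{(j,x),(j',x')}$. *)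

From HB Require Import structures.
From mathcomp Require Import all_boot all_order all_algebra.
From mathcomp Require Import all_classical all_reals.
From mathcomp Require Import topology normedtype sequences exp trigo.
From mathcomp Require Import complex.
Set Implicit Arguments. Unset Strict Implicit. Unset Printing Implicit Defensive.
Import Order.TTheory GRing.Theory Num.Theory.
Import numFieldNormedType.Exports.
Local Open Scope ring_scope.
Local Open Scope complex_scope.

Section Defs.
Variable R : realType.
Local Notation C := R[i].

(** Operators on C^I (I a finite type) are represented as square matrices
    'M[C]_#|I|, the basis vector of x : I having index enum_rank x. *)
Definition opentry (I : finType) (A : 'M[C]_#|I|) (x y : I) : C :=
  A (enum_rank x) (enum_rank y).

Definition mkop (I : finType) (f : I -> I -> C) : 'M[C]_#|I| :=
  \matrix_(a, b) f (enum_val a) (enum_val b).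

Definition hermitian_mx n (A : 'M[C]_n) : Prop :=
  forall i j, A j i = (A i j)^*.

Definition expm_partial n (A : 'M[C]_n) (N : nat) : 'M[C]_n :=
  \sum_(k < N) ((k`!)%:R^-1 : C) *: A ^+ k.

Definition expm n (A : 'M[C]_n) : 'M[C]_n :=
  \matrix_(i, j)
    ((limn (fun N => complex.Re (expm_partial A N i j))) +i*
     (limn (fun N => complex.Im (expm_partial A N i j)))).

Definition semigroup n (E : 'M[C]_n) (tau : R) : 'M[C]_n :=
  expm (- (tau%:C) *: E).

(** E generates a stochastic process: all entries of e^{-tau E} are
    (real and) nonnegative for tau >= 0. *)
Definition generates_stochastic n (E : 'M[C]_n) : Prop :=
  forall tau : R, 0 <= tau -> forall i j, 0 <= semigroup E tau i j.

Definition expi (t : R) : C := cos t +i* sin t.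

End Defs.

(** The torus Lambda = Z^d / L Z^d, a point being a d-tuple of residues
    mod L represented in 'I_L. *)
Definition torus (d L : nat) : finType := {ffun 'I_d -> 'I_L}.

Definition tsidx (d L ntau : nat) : finType := ('I_ntau.+1 * torus d L)%type.

Section Q.
Variable R : realType.
Variables (d L ntau : nat) (beta : R).
Local Notation Lam := (torus d L).
Local Notation C := R[i].

Definition eps_step : R := beta / ntau%:R.

(** h_j for j in {0..n_tau}, h_0 := 0, from h : {1..n_tau} x Lambda -> R
    given as h : 'I_ntau -> Lam -> R with h_j = h (j-1). *)
Definition hj (h : 'I_ntau -> Lam -> R) (j : nat) (x : Lam) : R :=
  if j is k.+1 then
    (if insub k is Some k' then h k' x else 0) else 0.

Definition Qmat (E : 'M[C]_#|Lam|) (h : 'I_ntau -> Lam -> R) :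
    'M[C]_#|tsidx d L ntau| :=
  mkop (fun (jx jx' : tsidx d L ntau) =>
    let: (j, x) := jx in let: (j', x') := jx' in
    ((j == j') && (x == x'))%:R
    - ((j.+1 == j' :> nat))%:R * opentry (semigroup E eps_step) x x'
        * expi (Num.sqrt eps_step * hj h j' x')).

Definition Cmat (E : 'M[C]_#|Lam|) (h : 'I_ntau -> Lam -> R) :
    'M[C]_#|tsidx d L ntau| := invmx (Qmat E h).

End Q.

(* Q(h) = 1 - N(h), where N(h) moves one time step forward with kernel
   e^{-eps E} times phases of modulus one; N(h) is nilpotent, so C(h) is the
   finite Neumann series sum_k N(h)^k.  Since e^{-eps E} >= 0 entrywise,
   |N(h)| <= N(0) entrywise, and this domination passes to powers and sums.
   In C(0) only the power k = j' - j connects time j to time j', giving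
   (e^{-eps E})^(j'-j) = e^{-(j'-j) eps E} by the exponential law, which is
   proved from the Cauchy product of truncated exponential series. *)

From HB Require Import structures.
From mathcomp Require Import all_boot all_order all_algebra.
From mathcomp Require Import all_classical all_reals.
From mathcomp Require Import topology normedtype sequences exp trigo.
From mathcomp Require Import complex.
Import Order.TTheory GRing.Theory Num.Theory.
From mathcomp Require Import ring lra.
Local Open Scope ring_scope.
Local Open Scope complex_scope.
Set Implicit Arguments. Unset Strict Implicit. Unset Printing Implicit Defensive.
Import numFieldNormedType.Exports.

Lemma sum_triangle (V : nmodType) (G : nat -> nat -> V) N :
  \sum_(m < N) \sum_(i < m.+1) G i (m - i)%N =
  \sum_(k < N) \sum_(l < N | (k + l < N)%N) G k l.
Proof.
have -> : \sum_(k < N) \sum_(l < N | (k + l < N)%N) G k l =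
          \sum_(k < N) \sum_(0 <= l < N - k) G k l.
  apply: eq_bigr => k _.
  rewrite -(big_mkord (fun l => k + l < N)%N) (big_nat_widen _ _ _ _ _ (leq_subr k N)).
  by apply: eq_bigl => l; rewrite ltn_subRL.
elim: N => [|N IH]; first by rewrite !big_ord0.
rewrite big_ord_recr /= IH [RHS]big_ord_recr /= subSnn big_nat1 big_ord_recr /= subnn.
rewrite addrA -big_split /=; congr (_ + _); apply: eq_bigr => k _.
by rewrite subSn ?(ltnW (ltn_ord k)) // big_nat_recr.
Qed.

Section TruncatedExponential.
Variables (K : numFieldType) (A : algType K).

Definition exp_trunc (N : nat) (x : A) : A := \sum_(k < N) (k`!%:R)^-1 *: x ^+ k.

Lemma invfact_binomial m i : (i <= m)%N ->
  (m`!%:R)^-1 * 'C(m, i)%:R = (i`!%:R)^-1 * ((m - i)`!%:R)^-1 :> K.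
Proof.
move=> le_im; rewrite -(bin_fact le_im) !natrM.
have nz k : (k`!%:R : K) != 0 by rewrite pnatr_eq0 -lt0n fact_gt0.
have nzC : ('C(m, i)%:R : K) != 0 by rewrite pnatr_eq0 -lt0n bin_gt0.
by field; rewrite nzC !nz.
Qed.

Lemma exp_truncM_sub N x y : GRing.comm x y ->
  exp_trunc N x * exp_trunc N y - exp_trunc N (x + y) =
  \sum_(k < N) \sum_(l < N | (N <= k + l)%N)
     ((k`!%:R)^-1 * (l`!%:R)^-1) *: (x ^+ k * y ^+ l).
Proof.
move=> cxy.
have -> : exp_trunc N x * exp_trunc N y =
    \sum_(k < N) \sum_(l < N) ((k`!%:R)^-1 * (l`!%:R)^-1) *: (x ^+ k * y ^+ l).
  rewrite /exp_trunc mulr_suml; apply: eq_bigr => k _; rewrite mulr_sumr.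
  by apply: eq_bigr => l _; rewrite -scalerAl -scalerAr scalerA.
have -> : exp_trunc N (x + y) =
    \sum_(k < N) \sum_(l < N | (k + l < N)%N)
       ((k`!%:R)^-1 * (l`!%:R)^-1) *: (x ^+ k * y ^+ l).
  rewrite /exp_trunc -(sum_triangle (fun k l =>
    ((k`!%:R)^-1 * (l`!%:R)^-1) *: (x ^+ k * y ^+ l))).
  apply: eq_bigr => m _; rewrite addrC exprDn_comm // scaler_sumr.
  apply: eq_bigr => i _; have le_im : (i <= m)%N by rewrite -ltnS.
  rewrite -[_ *+ 'C(m, i)]scaler_nat scalerA invfact_binomial //.
  by rewrite (commrX _ (commr_sym (commrX _ cxy))).
rewrite -sumrB; apply: eq_bigr => k _.
rewrite (bigID (fun l : 'I_N => (N <= k + l)%N)) /=.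
under [X in _ + X - _]eq_bigl do rewrite -ltnNge.
by rewrite addrK.
Qed.

End TruncatedExponential.

Section ComplexConvergence.
Variable R : realType.
Local Notation C := R[i].
Local Notation Re := (@complex.Re R).
Local Notation Im := (@complex.Im R).
Local Open Scope classical_set_scope.

Lemma ReM (z w : C) : Re (z * w) = Re z * Re w - Im z * Im w.
Proof. by case: z; case: w. Qed.

Lemma ImM (z w : C) : Im (z * w) = Re z * Im w + Im z * Re w.
Proof. by case: z => a b; case: w => c d /=; rewrite addrC. Qed.

Lemma Re_realM (r : R) (z : C) : Re (r%:C * z) = r * Re z.
Proof. by case: z => a b /=; rewrite mul0r subr0. Qed.

Lemma Im_realM (r : R) (z : C) : Im (r%:C * z) = r * Im z.
Proof. by case: z => a b /=; rewrite mul0r addr0. Qed.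

Definition cnorm1 (z : C) : R := `|Re z| + `|Im z|.

Lemma cnorm1_ge0 z : 0 <= cnorm1 z.
Proof. by rewrite addr_ge0. Qed.

Lemma Re_le_cnorm1 z : `|Re z| <= cnorm1 z.
Proof. by rewrite lerDl. Qed.

Lemma Im_le_cnorm1 z : `|Im z| <= cnorm1 z.
Proof. by rewrite lerDr. Qed.

Lemma cnorm1_nat (b : bool) : cnorm1 b%:R = b%:R.
Proof. by case: b; rewrite /cnorm1 /= ?normr0 ?normr1 ?addr0. Qed.

Lemma cnorm1D z w : cnorm1 (z + w) <= cnorm1 z + cnorm1 w.
Proof. by rewrite /cnorm1 !raddfD addrACA lerD ?ler_normD. Qed.

Lemma cnorm1M z w : cnorm1 (z * w) <= cnorm1 z * cnorm1 w.
Proof.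
rewrite /cnorm1 ReM ImM.
apply: (le_trans (lerD (ler_normB _ _) (ler_normD _ _))).
rewrite !normrM mulrDl !mulrDr; lra.
Qed.

Lemma cnorm1_realM (r : R) z : cnorm1 (r%:C * z) = `|r| * cnorm1 z.
Proof. by rewrite /cnorm1 Re_realM Im_realM !normrM mulrDr. Qed.

Lemma cnorm1_sum (I : Type) (r : seq I) (P : pred I) (F : I -> C) :
  cnorm1 (\sum_(i <- r | P i) F i) <= \sum_(i <- r | P i) cnorm1 (F i).
Proof.
elim/big_ind2: _ => //; first by rewrite /cnorm1 normr0 addr0.
by move=> z a w b za wb; apply: le_trans (cnorm1D _ _) (lerD za wb).
Qed.

(* Componentwise convergence, matching the definition of [expm]. *)
Definition cvgReIm (f : nat -> C) (l : C) :=
  (fun n => Re (f n)) @ \oo --> Re l /\ (fun n => Im (f n)) @ \oo --> Im l.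

Lemma cvgReIm_uniq f l l' : cvgReIm f l -> cvgReIm f l' -> l = l'.
Proof.
move=> [fa fb] [fa' fb'].
have := cvg_unique (@Rhausdorff R) fa fa'; have := cvg_unique (@Rhausdorff R) fb fb'.
by case: l l' {fa fb fa' fb'} => a b [a' b'] /= -> ->.
Qed.

Lemma cvgReIm_cst l : cvgReIm (fun _ => l) l.
Proof. by split; apply: cvg_cst. Qed.

Lemma cvgReImD f g l m :
  cvgReIm f l -> cvgReIm g m -> cvgReIm (fun n => f n + g n) (l + m).
Proof.
move=> [fRe fIm] [gRe gIm]; split.
  by under eq_fun do rewrite raddfD; rewrite raddfD; apply: cvgD.
by under eq_fun do rewrite raddfD; rewrite raddfD; apply: cvgD.
Qed.

Lemma cvgReImM f g l m :
  cvgReIm f l -> cvgReIm g m -> cvgReIm (fun n => f n * g n) (l * m).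
Proof.
move=> [fRe fIm] [gRe gIm]; split.
  by under eq_fun do rewrite ReM; rewrite ReM; apply: cvgB; apply: cvgM.
by under eq_fun do rewrite ImM; rewrite ImM; apply: cvgD; apply: cvgM.
Qed.

Lemma cvgReIm_sum (I : Type) (r : seq I) (F : I -> nat -> C) (L : I -> C) :
  (forall i, cvgReIm (F i) (L i)) ->
  cvgReIm (fun n => \sum_(i <- r) F i n) (\sum_(i <- r) L i).
Proof.
move=> FL; elim: r => [|i r IH].
  by under eq_fun do rewrite big_nil; rewrite big_nil; apply: cvgReIm_cst.
by under eq_fun do rewrite big_cons; rewrite big_cons; apply: cvgReImD.
Qed.

Lemma cvgReIm_approx f g l (e : nat -> R) :
  cvgReIm f l -> e @ \oo --> 0 -> (forall n, cnorm1 (f n - g n) <= e n) ->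
  cvgReIm g l.
Proof.
move=> fl e0 fg.
have small (u : nat -> R) : (forall n, `|u n| <= e n) -> u @ \oo --> 0.
  move=> ue; apply: (@squeeze_cvgr _ _ _ _ (fun n => - e n) e) => //.
  - by near=> n; rewrite -ler_norml ue.
  - by rewrite -oppr0; apply: cvgN.
have -> : g = (fun n => f n + - (f n - g n)).
  by apply: funext => n; rewrite opprB addrC subrK.
rewrite -[l]addr0; apply: cvgReImD => //.
split; apply: small => n; rewrite raddfN normrN.
- exact: le_trans (Re_le_cnorm1 _) (fg n).
- exact: le_trans (Im_le_cnorm1 _) (fg n).
Unshelve. all: by end_near.
Qed.

End ComplexConvergence.

Section MatrixExponential.
Variable R : realType.
Local Notation C := R[i].
Local Open Scope classical_set_scope.

Definition mxnorm1 n (A : 'M[C]_n) : R := \sum_i \sum_j cnorm1 (A i j).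

Lemma mxnorm1_ge0 n (A : 'M[C]_n) : 0 <= mxnorm1 A.
Proof. by do 2!apply: sumr_ge0 => ? _; apply: cnorm1_ge0. Qed.

Lemma row_cnorm1_le n (A : 'M[C]_n) i : \sum_j cnorm1 (A i j) <= mxnorm1 A.
Proof.
rewrite /mxnorm1 [leRHS](bigD1 i) //= lerDl.
by do 2!apply: sumr_ge0 => ? _; apply: cnorm1_ge0.
Qed.

Lemma cnorm1_entry_le n (A : 'M[C]_n) i j : cnorm1 (A i j) <= mxnorm1 A.
Proof.
apply: le_trans (row_cnorm1_le A i); rewrite [leRHS](bigD1 j) //= lerDl.
by apply: sumr_ge0 => k _; apply: cnorm1_ge0.
Qed.

Lemma mxnorm1M n (A B : 'M[C]_n) : mxnorm1 (A *m B) <= mxnorm1 A * mxnorm1 B.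
Proof.
apply: (@le_trans _ _ (\sum_i \sum_j \sum_k cnorm1 (A i k) * cnorm1 (B k j))).
  apply: ler_sum => i _; apply: ler_sum => j _; rewrite mxE.
  by apply: le_trans (cnorm1_sum _ _ _) _; apply: ler_sum => k _; apply: cnorm1M.
rewrite mulr_suml; apply: ler_sum => i _; rewrite exchange_big /= mulr_suml.
apply: ler_sum => k _; rewrite -mulr_sumr.
by rewrite ler_wpM2l ?cnorm1_ge0 ?row_cnorm1_le.
Qed.

Lemma mxnorm1_1 n : mxnorm1 (1%:M : 'M[C]_n) = n%:R.
Proof.
rewrite /mxnorm1 -[n in RHS]card_ord -sumr_const; apply: eq_bigr => i _.
rewrite (bigD1 i) //= big1 => [|j /negbTE ji]; rewrite mxE.
  by rewrite eqxx cnorm1_nat addr0.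
by rewrite eq_sym ji cnorm1_nat.
Qed.

Lemma mxnorm1X n (A : 'M[C]_n) k : mxnorm1 (A ^+ k) <= n%:R * mxnorm1 A ^+ k.
Proof.
elim: k => [|k IH]; first by rewrite !expr0 mulr1 mxnorm1_1.
rewrite exprSr -mulmxE; apply: le_trans (mxnorm1M _ _) _.
by rewrite exprSr mulrA ler_wpM2r ?mxnorm1_ge0.
Qed.

Lemma invfactC k : ((k`!%:R)^-1 : C) = ((k`!%:R)^-1 : R)%:C.
Proof. by rewrite fmorphV rmorph_nat. Qed.

Lemma exp_trunc_series (a : R) N : exp_trunc N (a : R^o) = series (exp_coeff a) N.
Proof.
rewrite /exp_trunc /series /exp_coeff /= big_mkord; apply: eq_bigr => k _.
by rewrite mulrC.
Qed.

Lemma exp_trunc_cvg (a : R) : (fun N => exp_trunc N (a : R^o)) @ \oo --> expR a.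
Proof.
under eq_fun do rewrite exp_trunc_series.
exact: is_cvg_series_exp_coeff.
Qed.

(* The series of [p] applied to the entries of [A ^+ k / k!] is dominated by
   [n * exp_coeff (mxnorm1 A)]. *)
Lemma cvgn_expm_partial_entry n (A : 'M[C]_n) i j (p : {additive C -> R}) :
  (forall r z, p (r%:C * z) = r * p z) -> (forall z, `|p z| <= cnorm1 z) ->
  cvgn (fun N => p (expm_partial A N i j)).
Proof.
move=> pR pn.
set t := fun k => ((k`!%:R)^-1 : R) * p ((A ^+ k) i j).
have -> : (fun N => p (expm_partial A N i j)) = series t.
  apply: funext => N; rewrite /series /= /expm_partial summxE big_mkord.
  by rewrite raddf_sum; apply: eq_bigr => k _; rewrite mxE invfactC pR.
apply: normed_cvg.
apply: (@series_le_cvg _ _ (fun k => n%:R * exp_coeff (mxnorm1 A) k)).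
- by move=> k; apply: normr_ge0.
- by move=> k; rewrite mulr_ge0 ?exp_coeff_ge0 ?mxnorm1_ge0.
- move=> k; rewrite /t /exp_coeff /= normrM ger0_norm ?invr_ge0 //.
  rewrite mulrC mulrA ler_wpM2r ?invr_ge0 //.
  exact: le_trans (pn _) (le_trans (cnorm1_entry_le _ _ _) (mxnorm1X _ _)).
- have -> : series (fun k => n%:R * exp_coeff (mxnorm1 A) k) =
            (fun N => n%:R * series (exp_coeff (mxnorm1 A)) N).
    by apply: funext => N; rewrite /series /= mulr_sumr.
  by apply: is_cvgMr; apply: is_cvg_series_exp_coeff.
Qed.

Lemma expm_partial_cvg n (A : 'M[C]_n) i j :
  cvgReIm (fun N => expm_partial A N i j) (expm A i j).
Proof.
rewrite /expm mxE; split => /=; apply: cvgn_expm_partial_entry.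
- exact: Re_realM.
- exact: Re_le_cnorm1.
- exact: Im_realM.
- exact: Im_le_cnorm1.
Qed.

Lemma expm_partialM_cvg n (X Y : 'M[C]_n) i j :
  cvgReIm (fun N => (expm_partial X N *m expm_partial Y N) i j)
          ((expm X *m expm Y) i j).
Proof.
rewrite mxE; under eq_fun do rewrite mxE.
by apply: cvgReIm_sum => k; apply: cvgReImM; apply: expm_partial_cvg.
Qed.

Lemma expm_partialM_sub_le n (X Y : 'M[C]_n.+1) N i j : X *m Y = Y *m X ->
  cnorm1 ((expm_partial X N *m expm_partial Y N) i j - expm_partial (X + Y) N i j)
  <= n.+1%:R ^+ 2 * (exp_trunc N (mxnorm1 X : R^o) * exp_trunc N (mxnorm1 Y : R^o)
                     - exp_trunc N (mxnorm1 X + mxnorm1 Y : R^o)).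
Proof.
move=> cXY.
have -> : (expm_partial X N *m expm_partial Y N) i j - expm_partial (X + Y) N i j
        = (exp_trunc N X * exp_trunc N Y - exp_trunc N (X + Y)) i j.
  by rewrite !mxE.
rewrite !exp_truncM_sub //; last exact: mulrC.
rewrite summxE; apply: le_trans (cnorm1_sum _ _ _) _.
rewrite mulr_sumr; apply: ler_sum => k _.
rewrite summxE; apply: le_trans (cnorm1_sum _ _ _) _.
rewrite mulr_sumr; apply: ler_sum => l _.
have fact_ge0 m : 0 <= ((m`!%:R)^-1 : R) by rewrite invr_ge0.
rewrite mxE !invfactC -rmorphM cnorm1_realM ger0_norm ?mulr_ge0 //.
rewrite mulrCA ler_wpM2l ?mulr_ge0 //.
apply: le_trans (cnorm1_entry_le _ _ _) _; rewrite -mulmxE.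
apply: le_trans (mxnorm1M _ _) _; rewrite expr2 mulrACA.
by apply: ler_pM; rewrite ?mxnorm1_ge0 ?mxnorm1X.
Qed.

Lemma expmD n (X Y : 'M[C]_n) : X *m Y = Y *m X ->
  expm (X + Y) = expm X *m expm Y.
Proof.
case: n X Y => [|n] X Y cXY; first by rewrite [LHS]flatmx0 [RHS]flatmx0.
apply/matrixP => i j; apply: cvgReIm_uniq (expm_partial_cvg (X + Y) i j) _.
apply: cvgReIm_approx (expm_partialM_cvg X Y i j) _
  (fun N => expm_partialM_sub_le N i j cXY).
set a := mxnorm1 X; set b := mxnorm1 Y.
have : (fun N => n.+1%:R ^+ 2 * (exp_trunc N (a : R^o) * exp_trunc N (b : R^o)
                                 - exp_trunc N (a + b : R^o)))
       @ \oo --> n.+1%:R ^+ 2 * (expR a * expR b - expR (a + b)).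
  by apply: cvgMr; apply: cvgB; [apply: cvgM|]; apply: exp_trunc_cvg.
by rewrite expRD subrr mulr0.
Qed.

Lemma expm0 n : expm (0 : 'M[C]_n) = 1%:M.
Proof.
apply/matrixP => i j; apply: cvgReIm_uniq (expm_partial_cvg 0 i j) _.
have partial0 N : expm_partial (0 : 'M[C]_n) N.+1 = 1%:M.
  rewrite /expm_partial big_ord_recl big1 => [|k _]; last by rewrite expr0n scaler0.
  by rewrite addr0 expr0 /= invr1 scale1r.
by split; rewrite -cvg_shiftS; under eq_fun do rewrite partial0; apply: cvg_cst.
Qed.

Lemma semigroup0 n (E : 'M[C]_n) : semigroup E 0 = 1%:M.
Proof. by rewrite /semigroup rmorph0 oppr0 scale0r expm0. Qed.

Lemma semigroupD n (E : 'M[C]_n) s t :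
  semigroup E (s + t) = semigroup E s *m semigroup E t.
Proof.
rewrite /semigroup -expmD; last by rewrite -!scalemxAl -!scalemxAr !scalerA mulrC.
by rewrite -scalerDl -opprD -rmorphD.
Qed.

Lemma semigroupMn n (E : 'M[C]_n) t k :
  semigroup E (k%:R * t) = semigroup E t ^+ k.
Proof.
elim: k => [|k IH]; first by rewrite mul0r semigroup0 expr0.
by rewrite mulrSr mulrDl mul1r semigroupD IH exprSr mulmxE.
Qed.

End MatrixExponential.

Section Operators.
Variables (R : realType) (I : finType).
Local Notation C := R[i].

Lemma opentry_inj (A B : 'M[C]_#|I|) :
  (forall a b, opentry A a b = opentry B a b) -> A = B.
Proof.
move=> AB; apply/matrixP => i j.
by rewrite -(enum_valK i) -(enum_valK j); apply: AB.
Qed.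

Lemma opentryM (A B : 'M[C]_#|I|) a b :
  opentry (A *m B) a b = \sum_c opentry A a c * opentry B c b.
Proof.
rewrite /opentry mxE (reindex (@enum_rank I)) //.
exact: onW_bij (enum_rank_bij I).
Qed.

Lemma opentry_mkop (f : I -> I -> C) a b : opentry (mkop f) a b = f a b.
Proof. by rewrite /opentry /mkop mxE !enum_rankK. Qed.

Lemma opentry1 a b : opentry (1%:M : 'M[C]_#|I|) a b = (a == b)%:R.
Proof. by rewrite /opentry mxE (inj_eq enum_rank_inj). Qed.

Lemma opentry_sum m (F : 'I_m -> 'M[C]_#|I|) a b :
  opentry (\sum_(k < m) F k) a b = \sum_(k < m) opentry (F k) a b.
Proof. by rewrite /opentry summxE. Qed.

Lemma opentryB (A B : 'M[C]_#|I|) a b :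
  opentry (A - B) a b = opentry A a b - opentry B a b.
Proof. by rewrite /opentry !mxE. Qed.

End Operators.

Lemma invmx_1subr_nilpotent (K : comUnitRingType) n (A : 'M[K]_n) m :
  A ^+ m = 0 -> invmx (1%:M - A) = \sum_(k < m) A ^+ k.
Proof.
move=> Am0.
have inv : (1%:M - A) *m \sum_(k < m) A ^+ k = 1%:M.
  by rewrite mulmxE -opprB mulNr -subrX1 Am0 sub0r opprK.
have [U _] := mulmx1_unit inv.
by rewrite -[RHS](mulKmx U) inv mulmx1.
Qed.

Section Domination.
Variables (K : numDomainType) (n : nat).

Definition mx_dominated (A B : 'M[K]_n) := forall i j, `|A i j| <= B i j.

Lemma mx_dominated1 : mx_dominated 1%:M 1%:M.
Proof. by move=> i j; rewrite mxE normr_nat. Qed.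

Lemma mx_dominatedM A B A' B' : mx_dominated A B -> mx_dominated A' B' ->
  mx_dominated (A *m A') (B *m B').
Proof.
move=> AB AB' i j; rewrite !mxE; apply: le_trans (ler_norm_sum _ _ _) _.
by apply: ler_sum => k _; rewrite normrM ler_pM.
Qed.

Lemma mx_dominatedX A B k : mx_dominated A B -> mx_dominated (A ^+ k) (B ^+ k).
Proof.
move=> AB; elim: k => [|k IH]; first by rewrite !expr0; apply: mx_dominated1.
by rewrite !exprSr -!mulmxE; apply: mx_dominatedM.
Qed.

Lemma mx_dominated_sum (J : Type) (r : seq J) (F G : J -> 'M[K]_n) :
  (forall k, mx_dominated (F k) (G k)) ->
  mx_dominated (\sum_(k <- r) F k) (\sum_(k <- r) G k).
Proof.
move=> FG i j; rewrite !summxE; apply: le_trans (ler_norm_sum _ _ _) _.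
by apply: ler_sum => k _; apply: FG.
Qed.

End Domination.

Section TimeSteps.
Variables (R : realType) (n : nat) (I : finType).
Local Notation C := R[i].
Local Notation T := ('I_n.+1 * I)%type.

Definition time_step (B : 'I_n.+1 -> I -> I -> C) : 'M[C]_#|{: T}| :=
  mkop (fun a b : T => (a.1.+1 == b.1 :> nat)%:R * B b.1 a.2 b.2).

Lemma time_stepX_eq0 B k (a b : T) : (b.1 : nat) != (a.1 + k)%N ->
  opentry (time_step B ^+ k) a b = 0.
Proof.
elim: k b => [|k IH] b neq_b.
  by rewrite expr0 opentry1; case: eqP => // eq_ab; rewrite eq_ab addn0 eqxx in neq_b.
rewrite exprSr -mulmxE opentryM big1 // => c _.
have [e|ne] := eqVneq (c.1 : nat) (a.1 + k)%N; last by rewrite IH ?mul0r.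
rewrite opentry_mkop (_ : (c.1.+1 == b.1 :> nat) = false) ?mul0r ?mulr0 //.
by apply/negbTE; rewrite e -addnS eq_sym.
Qed.

Lemma time_step_nilpotent B : time_step B ^+ n.+1 = 0.
Proof.
apply: opentry_inj => a b; rewrite /opentry mxE -/(opentry _ a b).
by rewrite time_stepX_eq0 // neq_ltn (leq_trans (ltn_ord b.1)) ?leq_addl.
Qed.

Lemma time_step_dominated B B' : (forall j x y, `|B j x y| <= B' j x y) ->
  mx_dominated (time_step B) (time_step B').
Proof. by move=> BB' i j; rewrite !mxE normrM normr_nat ler_wpM2l. Qed.

Lemma sum_ord_eq_succ (m : nat) (j' : 'I_n.+1) :
  \sum_(j : 'I_n.+1) ((j == m :> nat) && (j.+1 == j' :> nat))%:R
  = (j' == m.+1 :> nat)%:R :> C.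
Proof.
have [lt_mn|le_nm] := ltnP m n.+1.
  rewrite (bigD1 (Ordinal lt_mn)) //= eqxx big1 ?addr0 => [|j ne_jm].
    by rewrite eq_sym.
  suff /negbTE-> : (j != m :> nat) by [].
  by apply: contra ne_jm => /eqP e; apply/eqP/val_inj.
rewrite big1 => [|j _]; last by rewrite ltn_eqF // (leq_trans (ltn_ord j)).
by rewrite ltn_eqF // (leq_trans (ltn_ord j')) // ltnW.
Qed.

Lemma time_step_constX (S : 'M[C]_#|I|) k (a b : T) :
  opentry (time_step (fun _ => opentry S) ^+ k) a b
  = ((b.1 : nat) == (a.1 + k)%N)%:R * opentry (S ^+ k) a.2 b.2.
Proof.
case: a => j x; elim: k b => [|k IH] [j' x'] /=.
  by rewrite !expr0 !opentry1 addn0 -natrM mulnb xpair_eqE eq_sym.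
rewrite exprSr -mulmxE opentryM.
have pairE (F : T -> C) : \sum_c F c = \sum_(j2 : 'I_n.+1) \sum_(y : I) F (j2, y).
  by rewrite pair_bigA; apply: eq_bigr => -[].
rewrite pairE /=.
under eq_bigr do under eq_bigr do rewrite IH opentry_mkop /= mulrACA mulrA -natrM mulnb.
rewrite addnS -sum_ord_eq_succ mulr_suml; apply: eq_bigr => j2 _.
by rewrite exprSr -mulmxE opentryM mulr_sumr; under [RHS]eq_bigr do rewrite mulrA.
Qed.

End TimeSteps.

Lemma norm_expi (R : realType) (t : R) : `|expi t| = 1.
Proof. by rewrite normc_def /= cos2Dsin2 sqrtr1. Qed.

Lemma expi0 (R : realType) : expi (0 : R) = 1.
Proof. by rewrite /expi cos0 sin0. Qed.

Section Propagator.
Variables (R : realType) (d L ntau : nat) (beta : R) (E : 'M[R[i]]_#|torus d L|).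
Local Notation Lam := (torus d L).
Local Notation eps := (eps_step ntau beta).
Local Notation S := (semigroup E eps).
Local Notation h0 := (fun (_ : 'I_ntau) (_ : Lam) => 0 : R).

Definition Qstep (h : 'I_ntau -> Lam -> R) : 'M[R[i]]_#|tsidx d L ntau| :=
  time_step (fun j' x x' => opentry S x x' * expi (Num.sqrt eps * hj h j' x')).

Lemma Qmat_Qstep h : Qmat beta E h = 1%:M - Qstep h.
Proof.
apply: opentry_inj => -[j x] [j' x'].
by rewrite opentryB opentry1 /Qstep /time_step !opentry_mkop xpair_eqE /= mulrA.
Qed.

Lemma Cmat_Qstep h : Cmat beta E h = \sum_(k < ntau.+1) Qstep h ^+ k.
Proof. by rewrite /Cmat Qmat_Qstep (invmx_1subr_nilpotent (time_step_nilpotent _)). Qed.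

Lemma hj0 j x : hj h0 j x = 0.
Proof. by case: j => // k; rewrite /hj; case: insub. Qed.

Lemma Qstep0 : Qstep h0 = time_step (fun _ => opentry S).
Proof.
congr time_step; apply/funext => j'; apply/funext => x; apply/funext => x'.
by rewrite hj0 mulr0 expi0 mulr1.
Qed.

Lemma Cmat0_entry (j j' : 'I_ntau.+1) x x' : (j <= j')%N ->
  opentry (Cmat beta E h0) (j, x) (j', x') = opentry (S ^+ (j' - j)) x x'.
Proof.
move=> le_jj'; rewrite Cmat_Qstep Qstep0 opentry_sum.
have lt_k : (j' - j < ntau.+1)%N by apply: leq_ltn_trans (leq_subr _ _) (ltn_ord j').
rewrite (bigD1 (Ordinal lt_k)) //= time_step_constX /= subnKC // eqxx mul1r.
rewrite big1 ?addr0 // => k ne_k; rewrite time_step_constX /=.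
case: eqP => [e|]; last by rewrite mul0r.
by move: ne_k; rewrite (_ : k = Ordinal lt_k) ?eqxx //; apply/val_inj; rewrite /= e addKn.
Qed.

Hypothesis S_ge0 : forall x x', 0 <= opentry S x x'.

Lemma Cmat_dominated h : mx_dominated (Cmat beta E h) (Cmat beta E h0).
Proof.
rewrite !Cmat_Qstep; apply: mx_dominated_sum => k; apply: mx_dominatedX.
rewrite Qstep0; apply: time_step_dominated => j x y.
by rewrite normrM norm_expi mulr1 ger0_norm.
Qed.

End Propagator.

Unset Implicit Arguments.

Theorem lemma6p1 (R : realType) (d L ntau : nat) (beta : R)
    (E : 'M[complex R]_#|torus d L|) :
  (0 < L)%N -> (0 < ntau)%N -> 0 < beta ->
  hermitian_mx E -> generates_stochastic E ->
  forall (j j' : 'I_ntau.+1) (x x' : torus d L)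
         (h : 'I_ntau -> torus d L -> R),
    (j <= j')%N ->
    `| opentry (Cmat beta E h) (j, x) (j', x') |
      <= `| opentry (Cmat beta E (fun _ _ => 0)) (j, x) (j', x') |
    /\ opentry (Cmat beta E (fun _ _ => 0)) (j, x) (j', x')
       = opentry (semigroup E ((j' - j)%N%:R * eps_step ntau beta)) x x'.
Proof.
move=> _ _ beta_gt0 _ stochastic j j' x x' h le_jj'.
have S_ge0 y y' : 0 <= opentry (semigroup E (eps_step ntau beta)) y y'.
  by apply: stochastic; rewrite divr_ge0 // ltW.
have dom := Cmat_dominated S_ge0 h (enum_rank (j, x)) (enum_rank (j', x')).
split; last by rewrite Cmat0_entry // semigroupMn.
by rewrite [X in _ <= X]ger0_norm //; apply: le_trans (normr_ge0 _) dom.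
Qed.
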